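(* Let $W$ be an NDCSE with respect to a closed abelian subgroup $H\subseteq G$. Then $\mathcal A_W=\mathcal T_H\circ\mathcal P_D$, where $\mathcal T_H(X)=\int_H R(h)XR(h)^\dagger\,dh$ (normalized Haar measure on $H$) and $\mathcal P_D$ is the Hilbert–Schmidt orthogonal projector onto $\mathcal L^{\mathcal D}$.
   Context: Standing setting: $G$ compact group with normalized Haar measure, $R:G\to\mathsf U(\mathcal H)$ a continuous unitary representation on a finite-dimensional Hilbert space $\mathcal H$; $\mathcal L=\mathrm{End}(\mathcal H)$ with Hilbert–Schmidt inner product. For an orthonormal basis $W$ of $\mathcal H$, $\mathcal A_W(X)=\sum_{w\in W}\langle w|X|w\rangle|w\rangle\langle w|$. A Fourier basis (FB) is an orthonormal basis $W$ with a decomposition $\mathcal H=\bigoplus_{\eta,i}\mathcal H^{\eta,i}$ into irreducible $G$-submodules such that $W=\bigcup W^{\eta,i}$ with $W^{\eta,i}$ an orthonormal basis of $\mathcal H^{\eta,i}$; $\mathcal L^{\mathcal D}=\bigoplus_{\eta,i}\mathrm{End}(\mathcal H^{\eta,i})$. A commuting subgroup eigenbasis (CSE) with respect to an abelian subgroup $H\subseteq G$ is an FB each of whose elements is a simultaneous eigenvector of all $R(h)$, $h\in H$; it is non-degenerate (NDCSE) if for every $(\eta,i)$ the restriction of $\mathcal H^{\eta,i}$ to $H$ is multiplicity-free (equivalently, distinct elements of $W^{\eta,i}$ carry distinct characters of $H$). *)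

From HB Require Import structures.
From mathcomp Require Import all_boot all_order all_algebra.
From mathcomp Require Import classical_sets boolp reals ereal topology normedtype
  measure lebesgue_integral.
From mathcomp Require Import complex.

Set Implicit Arguments.
Unset Strict Implicit.
Unset Printing Implicit Defensive.

Import Order.TTheory GRing.Theory Num.Theory numFieldNormedType.Exports.
Local Open Scope ring_scope.
Local Open Scope classical_set_scope.

Definition is_topological_group (G : ptopologicalType)
    (mul : G -> G -> G) (inv : G -> G) (e : G) : Prop :=
  [/\ (forall x y z, mul x (mul y z) = mul (mul x y) z),
      (forall x, mul e x = x /\ mul x e = x),
      (forall x, mul (inv x) x = e /\ mul x (inv x) = e),
      continuous (fun p : G * G => mul p.1 p.2) &
      continuous inv].

Definition is_abelian_subgroup (G : Type) (mul : G -> G -> G) (inv : G -> G)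
    (e : G) (H : set G) : Prop :=
  [/\ H e,
      (forall x y, H x -> H y -> H (mul x y)),
      (forall x, H x -> H (inv x)) &
      (forall x y, H x -> H y -> mul x y = mul y x)].

Definition Borel (G : ptopologicalType) := g_sigma_algebraType (@open G).

Definition is_normalized_haar (R : realType) (G : ptopologicalType)
    (mul : G -> G -> G) (H : set G)
    (mu : {measure set (Borel G) -> \bar R}) : Prop :=
  [/\ mu [set: Borel G] = 1%E,
      mu (~` (H : set (Borel G))) = 0%E &
      (forall h0, H h0 -> forall A : set (Borel G), measurable A ->
         mu [set (mul h0 x : Borel G) | x in A] = mu A)].

Definition adjmx (R : realType) (m p : nat) (M : 'M[R[i]]_(m, p)) : 'M[R[i]]_(p, m) :=
  (map_mx (@conjc R) M)^T.

Definition hs_dot (R : realType) (n : nat) (X Y : 'M[R[i]]_n) : R[i] :=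
  \tr (adjmx X *m Y).

Definition is_cont_unitary_rep (R : realType) (G : ptopologicalType)
    (mul : G -> G -> G) (e : G) (n : nat) (rep : G -> 'M[R[i]]_n) : Prop :=
  [/\ rep e = 1%:M,
      (forall g h, rep (mul g h) = rep g *m rep h),
      (forall g, rep g *m adjmx (rep g) = 1%:M) &
      (forall i j, continuous (fun g => complex.Re (rep g i j)) /\
                   continuous (fun g => complex.Im (rep g i j)))].

Definition is_orthonormal_basis (R : realType) (n : nat)
    (w : 'I_n -> 'cV[R[i]]_n) : Prop :=
  forall i j, adjmx (w i) *m w j = (i == j)%:R%:M.

(* Subspace of C^n spanned by {w j | blk j = b}; subspaces are encoded,
   as in mxalgebra, by row spaces: row j is the transpose of w j. *)
Definition block_space (R : realType) (n k : nat)
    (w : 'I_n -> 'cV[R[i]]_n) (blk : 'I_n -> 'I_k) (b : 'I_k) : 'M[R[i]]_n :=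
  \matrix_(j, i) (if blk j == b then w j i ord0 else 0).

(* the subspace (row space of S) is invariant under all rep g;
   a column vector v is mapped to rep g *m v, i.e. v^T to v^T *m (rep g)^T *)
Definition is_invariant (R : realType) (G : Type) (n m : nat)
    (rep : G -> 'M[R[i]]_n) (S : 'M[R[i]]_(m, n)) : Prop :=
  forall g, (S *m (rep g)^T <= S)%MS.

Definition is_irreducible_submodule (R : realType) (G : Type) (n : nat)
    (rep : G -> 'M[R[i]]_n) (S : 'M[R[i]]_n) : Prop :=
  [/\ S != 0,
      is_invariant rep S &
      (forall U : 'M[R[i]]_n, (U <= S)%MS -> is_invariant rep U ->
         (U == 0) || (U == S)%MS)].

(* Fourier basis: orthonormal basis w together with a partition blk of its
   elements into blocks W^b, each spanning an irreducible G-submodule H^b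
   (so that H = (+)_b H^b). *)
Definition is_FB (R : realType) (G : Type) (n k : nat)
    (rep : G -> 'M[R[i]]_n) (w : 'I_n -> 'cV[R[i]]_n) (blk : 'I_n -> 'I_k) : Prop :=
  is_orthonormal_basis w /\
  forall b, is_irreducible_submodule rep (block_space w blk b).

Definition is_CSE (R : realType) (G : Type) (n k : nat)
    (rep : G -> 'M[R[i]]_n) (H : set G) (w : 'I_n -> 'cV[R[i]]_n)
    (blk : 'I_n -> 'I_k) : Prop :=
  is_FB rep w blk /\
  forall j h, H h -> exists lam : R[i], rep h *m w j = lam *: w j.

Definition is_NDCSE (R : realType) (G : Type) (n k : nat)
    (rep : G -> 'M[R[i]]_n) (H : set G) (w : 'I_n -> 'cV[R[i]]_n)
    (blk : 'I_n -> 'I_k) : Prop :=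
  is_CSE rep H w blk /\
  forall j j', j != j' -> blk j = blk j' ->
    exists h, [/\ H h & exists lam lam' : R[i],
      [/\ rep h *m w j = lam *: w j, rep h *m w j' = lam' *: w j' & lam != lam']].

Definition dephase (R : realType) (n : nat) (w : 'I_n -> 'cV[R[i]]_n)
    (X : 'M[R[i]]_n) : 'M[R[i]]_n :=
  \sum_(j < n) (adjmx (w j) *m X *m w j) ord0 ord0 *: (w j *m adjmx (w j)).

Definition block_proj (R : realType) (n k : nat) (w : 'I_n -> 'cV[R[i]]_n)
    (blk : 'I_n -> 'I_k) (b : 'I_k) : 'M[R[i]]_n :=
  \sum_(j < n | blk j == b) w j *m adjmx (w j).

(* L^D = (+)_b End(H^b), End(H^b) being identified with the operators on H
   supported on H^b (X = Pi_b X Pi_b). *)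
Definition in_LD (R : realType) (n k : nat) (w : 'I_n -> 'cV[R[i]]_n)
    (blk : 'I_n -> 'I_k) (X : 'M[R[i]]_n) : Prop :=
  exists Xb : 'I_k -> 'M[R[i]]_n,
    (forall b, Xb b = block_proj w blk b *m Xb b *m block_proj w blk b) /\
    X = \sum_(b < k) Xb b.

Definition is_HS_orth_projector (R : realType) (n : nat)
    (V : 'M[R[i]]_n -> Prop) (P : 'M[R[i]]_n -> 'M[R[i]]_n) : Prop :=
  forall X, V (P X) /\ (forall Y, V Y -> hs_dot (X - P X) Y = 0).

Definition cintegral (R : realType) (T : ptopologicalType)
    (mu : {measure set (Borel T) -> \bar R}) (D : set T) (f : T -> R[i]) : R[i] :=
  (Rintegral mu (D : set (Borel T)) (fun x => complex.Re (f x)) +i*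
   Rintegral mu (D : set (Borel T)) (fun x => complex.Im (f x)))%C.

Definition twirl (R : realType) (G : ptopologicalType) (n : nat)
    (rep : G -> 'M[R[i]]_n) (mu : {measure set (Borel G) -> \bar R})
    (H : set G) (X : 'M[R[i]]_n) : 'M[R[i]]_n :=
  \matrix_(i, j) cintegral mu H (fun h => (rep h *m X *m adjmx (rep h)) i j).

From HB Require Import structures.
From mathcomp Require Import all_boot all_order all_algebra.
From mathcomp Require Import classical_sets boolp reals ereal topology normedtype
  measure lebesgue_measure lebesgue_integral measurable_realfun.
From mathcomp Require Import complex.

(* For h in H every w_a is an eigenvector, R(h) w_a = lambda_a(h) w_a, so
   conjugation by R(h) multiplies the matrix unit |w_a><w_b| by the character
   chi_ab(h) = lambda_a(h) lambda_b(h)^*.  By invariance of the Haar measure, the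
   integral of a character over H is 1 if it is trivial and 0 otherwise, and by
   non-degeneracy chi_ab is non-trivial for distinct a, b in a common block.
   Writing Y = P_D X in the basis of matrix units, T_H therefore keeps the
   diagonal coefficients of Y and kills the others: those with a, b in a common
   block by the above, those with a, b in different blocks because they vanish
   already on L^D.  Finally <w_a|Y|w_a> = <w_a|X|w_a>, since |w_a><w_a| lies in
   L^D and is thus Hilbert-Schmidt orthogonal to X - Y. *)

Set Implicit Arguments.
Unset Strict Implicit.
Unset Printing Implicit Defensive.

Import Order.TTheory GRing.Theory Num.Theory numFieldNormedType.Exports.
Local Open Scope ring_scope.
Local Open Scope classical_set_scope.

Local Notation Re := complex.Re.
Local Notation Im := complex.Im.

Section ComplexParts.
Variable R : fieldType.
Implicit Types a b : R[i].

Lemma ReD a b : Re (a + b) = Re a + Re b. Proof. by case: a; case: b. Qed.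
Lemma ImD a b : Im (a + b) = Im a + Im b. Proof. by case: a; case: b. Qed.
Lemma ReM a b : Re (a * b) = Re a * Re b - Im a * Im b.
Proof. by case: a; case: b. Qed.
Lemma ImM a b : Im (a * b) = Re a * Im b + Im a * Re b.
Proof. by case: a => ? ?; case: b => ? ? /=; rewrite addrC. Qed.
Lemma ReJ a : Re (conjc a) = Re a. Proof. by case: a. Qed.
Lemma ImJ a : Im (conjc a) = - Im a. Proof. by case: a. Qed.

End ComplexParts.

Section ComplexContinuous.
Variables (R : realType) (T : topologicalType).
Implicit Types f g : T -> R[i].

Definition ccontinuous f :=
  continuous (fun x => Re (f x)) /\ continuous (fun x => Im (f x)).

Let continuous_eqfun (u v : T -> R) : u =1 v -> continuous u -> continuous v.
Proof. by move=> /funext ->. Qed.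

Lemma ccontinuous_cst c : ccontinuous (fun _ => c).
Proof. by split=> x; apply: cst_continuous. Qed.

Lemma ccontinuousD f g :
  ccontinuous f -> ccontinuous g -> ccontinuous (fun x => f x + g x).
Proof.
move=> [f1 f2] [g1 g2]; split.
  by apply: continuous_eqfun (fun x => continuousD (f1 x) (g1 x)) => x; rewrite ReD.
by apply: continuous_eqfun (fun x => continuousD (f2 x) (g2 x)) => x; rewrite ImD.
Qed.

Lemma ccontinuousM f g :
  ccontinuous f -> ccontinuous g -> ccontinuous (fun x => f x * g x).
Proof.
move=> [f1 f2] [g1 g2]; split.
  apply: continuous_eqfun
    (fun x => continuousB (continuousM (f1 x) (g1 x)) (continuousM (f2 x) (g2 x))).
  by move=> x; rewrite ReM.
apply: continuous_eqfun
  (fun x => continuousD (continuousM (f1 x) (g2 x)) (continuousM (f2 x) (g1 x))).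
by move=> x; rewrite ImM.
Qed.

Lemma ccontinuousJ f : ccontinuous f -> ccontinuous (fun x => conjc (f x)).
Proof.
move=> [f1 f2]; split; first by apply: continuous_eqfun f1 => x; rewrite ReJ.
by apply: continuous_eqfun (fun x => continuousN (f2 x)) => x; rewrite ImJ.
Qed.

Lemma ccontinuous_sum (I : eqType) (s : seq I) (P : pred I) (F : I -> T -> R[i]) :
  (forall i, ccontinuous (F i)) ->
  ccontinuous (fun x => \sum_(i <- s | P i) F i x).
Proof.
move=> cF; elim: s => [|a s IH].
  by under eq_fun do rewrite big_nil; apply: ccontinuous_cst.
under eq_fun do rewrite big_cons.
by case: (P a); [apply: ccontinuousD | ].
Qed.

Lemma ccontinuous_mulmx m p q (A : T -> 'M[R[i]]_(m, p)) (B : T -> 'M[R[i]]_(p, q)) :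
  (forall i j, ccontinuous (fun x => A x i j)) ->
  (forall i j, ccontinuous (fun x => B x i j)) ->
  forall i j, ccontinuous (fun x => (A x *m B x) i j).
Proof.
move=> cA cB i j; under eq_fun do rewrite mxE.
by apply: ccontinuous_sum => l; apply: ccontinuousM.
Qed.

End ComplexContinuous.

Section ComplexIntegral.
Variables (R : realType) (G : ptopologicalType).
Variables (mu : {measure set (Borel G) -> \bar R}) (H : set G).
Hypotheses (compactG : compact [set: G]) (mH : measurable (H : set (Borel G))).
Hypothesis finH : (mu H < +oo)%E.

Local Notation CI := (cintegral mu H).

Lemma continuous_measurable_fun_real (g : G -> R) :
  continuous g -> measurable_fun [set: Borel G] g.
Proof.
move=> cg; apply: (@measurability _ _ _ _ _ _ (@RGenOpens.G R)).
  exact: RGenOpens.measurableE.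
move=> _ [_ [a [b ->] <-]]; rewrite setTI; apply: sub_sigma_algebra.
by move/continuousP: cg; apply; exact: interval_open.
Qed.

Lemma continuous_integrable (g : G -> R) :
  continuous g -> mu.-integrable (H : set (Borel G)) (EFin \o g).
Proof.
move=> cg; have mg := continuous_measurable_fun_real cg.
have [M [_ gM]] :=
  compact_bounded (continuous_compact (continuous_subspaceT cg) compactG).
apply/integrableP; split; first exact/measurable_EFinP/measurable_funTS.
apply: (@le_lt_trans _ _ ((`|M| + 1)%:E * mu H)%E); last exact: lte_mul_pinfty.
apply: integral_le_bound => //; first exact/measurable_EFinP/measurable_funTS.
apply: aeW => x _; rewrite lee_fin; apply: (gM (`|M| + 1)); last by exists x.
by rewrite ltr_pwDr // ler_norm.
Qed.

Lemma eq_cintegral f g : {in H, f =1 g} -> CI f = CI g.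
Proof.
by move=> fg; rewrite /cintegral; congr (_ +i* _)%C; apply: eq_Rintegral => x /fg->.
Qed.

Lemma cintegralD f g :
  ccontinuous f -> ccontinuous g -> CI (fun x => f x + g x) = CI f + CI g.
Proof.
move=> [f1 f2] [g1 g2]; rewrite /cintegral.
under eq_Rintegral => x _ do rewrite ReD.
under [X in (_ +i* X)%C]eq_Rintegral => x _ do rewrite ImD.
by rewrite !RintegralD //; apply: continuous_integrable.
Qed.

Lemma cintegralZl c f : ccontinuous f -> CI (fun x => c * f x) = c * CI f.
Proof.
move=> [f1 f2]; have iZ (u : G -> R) (a : R) : continuous u ->
    mu.-integrable (H : set (Borel G)) (EFin \o (fun x => a * u x)).
  move=> cu; apply: continuous_integrable => x.
  exact: continuousM (cvg_cst a) (cu x).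
rewrite /cintegral.
under eq_Rintegral => x _ do rewrite ReM.
under [X in (_ +i* X)%C]eq_Rintegral => x _ do rewrite ImM.
rewrite RintegralB ?RintegralD ?iZ //.
by rewrite !RintegralZl ?continuous_integrable //; case: c.
Qed.

Lemma cintegral_cst c : mu H = 1%E -> CI (fun _ => c) = c.
Proof. by move=> muH; rewrite /cintegral !Rintegral_cst // muH /= !mulr1; case: c. Qed.

Lemma cintegral_sum (I : eqType) (s : seq I) (P : pred I) (F : I -> G -> R[i]) :
  (forall i, ccontinuous (F i)) ->
  CI (fun x => \sum_(i <- s | P i) F i x) = \sum_(i <- s | P i) CI (F i).
Proof.
move=> cF; elim: s => [|a s IH].
  by under eq_fun do rewrite big_nil; rewrite big_nil /cintegral !Rintegral_cst // !mul0r.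
under eq_fun do rewrite big_cons; rewrite big_cons.
by case: (P a); rewrite ?cintegralD ?IH //; apply: ccontinuous_sum.
Qed.

Lemma continuous_measurable_fun_Borel (phi : G -> G) :
  continuous phi -> measurable_fun [set: Borel G] (phi : Borel G -> Borel G).
Proof.
move=> cphi; apply: (measurability _ (erefl (@measurable _ (Borel G)))).
move=> _ [B oB <-]; rewrite setTI; apply: sub_sigma_algebra.
by move/continuousP: cphi; apply.
Qed.

Section MeasurePreserving.
Variable phi : G -> G.
Hypotheses (cphi : continuous phi) (phiH : phi @^-1` H = H).
Hypothesis phi_mu :
  forall A : set (Borel G), measurable A -> mu (phi @^-1` A) = mu A.

Lemma Rintegral_comp (g : G -> R) : continuous g ->
  Rintegral mu (H : set (Borel G)) (g \o phi) = Rintegral mu (H : set (Borel G)) g.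
Proof.
move=> cg; have mphi := continuous_measurable_fun_Borel cphi.
have mg : measurable_fun [set: Borel G] (EFin \o g).
  by apply/measurable_EFinP; apply: continuous_measurable_fun_real.
have ig : mu.-integrable (phi @^-1` H : set (Borel G)) ((EFin \o g) \o phi).
  rewrite phiH; apply: (@continuous_integrable (g \o phi)) => x.
  by apply: continuous_comp; [apply: cphi | apply: cg].
rewrite /Rintegral; congr fine.
have := integral_pushforward mphi mg ig mH; rewrite phiH => <-.
by apply: eq_measure_integral => A mA _; rewrite /= /pushforward phi_mu.
Qed.

Lemma cintegral_comp f : ccontinuous f -> CI (f \o phi) = CI f.
Proof. by move=> [f1 f2]; rewrite /cintegral -(Rintegral_comp f1) -(Rintegral_comp f2). Qed.

End MeasurePreserving.

End ComplexIntegral.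

Section Adjoint.
Variable R : realType.
Local Notation C := R[i].

Lemma adjmxE m p (M : 'M[C]_(m, p)) i j : adjmx M i j = conjc (M j i).
Proof. by rewrite !mxE. Qed.

Lemma adjmxK m p (M : 'M[C]_(m, p)) : adjmx (adjmx M) = M.
Proof. by apply/matrixP => i j; rewrite !adjmxE conjcK. Qed.

Lemma adjmxM m p q (A : 'M[C]_(m, p)) (B : 'M[C]_(p, q)) :
  adjmx (A *m B) = adjmx B *m adjmx A.
Proof.
apply/matrixP => i j; rewrite !mxE rmorph_sum; apply: eq_bigr => l _.
by rewrite !mxE rmorphM mulrC.
Qed.

Lemma adjmxZ m p c (A : 'M[C]_(m, p)) : adjmx (c *: A) = conjc c *: adjmx A.
Proof. by apply/matrixP => i j; rewrite !mxE rmorphM. Qed.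

End Adjoint.

Section OrthonormalBasis.
Variables (R : realType) (n : nat) (w : 'I_n -> 'cV[R[i]]_n).
Hypothesis onb : is_orthonormal_basis w.
Local Notation C := R[i].

Definition mxcoef (M : 'M[C]_n) a b := (adjmx (w a) *m M *m w b) ord0 ord0.

Lemma sum_outer_onb : \sum_a w a *m adjmx (w a) = 1%:M.
Proof.
pose W : 'M[C]_n := \matrix_(i, a) w a i ord0.
have WW : adjmx W *m W = 1%:M.
  apply/matrixP => a b; move/matrixP/(_ ord0 ord0): (onb a b).
  by rewrite !mxE eqxx mulr1n => <-; apply: eq_bigr => i _; rewrite !mxE.
apply/matrixP => i j; rewrite -(mulmx1C WW) !mxE summxE; apply: eq_bigr => a _.
by rewrite !mxE big_ord1 !mxE.
Qed.

Lemma mx_expand_onb M :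
  M = \sum_a \sum_b mxcoef M a b *: (w a *m adjmx (w b)).
Proof.
rewrite -[LHS]mul1mx -[LHS]mulmx1 -sum_outer_onb !mulmx_suml.
apply: eq_bigr => a _; rewrite !mulmx_sumr; apply: eq_bigr => b _.
rewrite -!mulmxA scalemxAr; congr (_ *m _).
by rewrite !mulmxA [adjmx (w a) *m M *m w b]mx11_scalar mul_scalar_mx.
Qed.

Lemma mxcoefB A B a b : mxcoef (A - B) a b = mxcoef A a b - mxcoef B a b.
Proof. by rewrite /mxcoef mulmxBr mulmxBl !mxE. Qed.

Lemma mxcoef_eigen M a l : M *m w a = l *: w a -> mxcoef M a a = l.
Proof. by move=> Ma; rewrite /mxcoef -mulmxA Ma -scalemxAr onb eqxx !mxE mulr1. Qed.

Lemma hs_dot_outer Z a : hs_dot Z (w a *m adjmx (w a)) = conjc (mxcoef Z a a).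
Proof.
rewrite /hs_dot mulmxA mxtrace_mulC [_ *m (adjmx Z *m w a)]mx11_scalar.
by rewrite mxtrace_scalar /mxcoef -adjmxE !adjmxM adjmxK mulmxA.
Qed.

Variables (k : nat) (blk : 'I_n -> 'I_k).

Lemma block_proj_onb b a :
  block_proj w blk b *m w a = if blk a == b then w a else 0.
Proof.
rewrite /block_proj mulmx_suml.
under eq_bigr => j _ do rewrite -mulmxA onb mul_mx_scalar.
case: ifP => ab.
  rewrite (bigD1 a) //= eqxx scale1r big1 ?addr0 // => j /andP[_ /negbTE ->].
  by rewrite scale0r.
apply: big1 => j jb; case: eqP => [ja|]; last by rewrite scale0r.
by move: ab; rewrite -ja jb.
Qed.

Lemma onb_block_proj b a :
  adjmx (w a) *m block_proj w blk b = if blk a == b then adjmx (w a) else 0.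
Proof.
rewrite /block_proj mulmx_sumr.
under eq_bigr => j _ do rewrite mulmxA onb mul_scalar_mx.
case: ifP => ab.
  rewrite (bigD1 a) //= eqxx scale1r big1 ?addr0 // => j /andP[_].
  by rewrite eq_sym => /negbTE ->; rewrite scale0r.
apply: big1 => j jb; case: eqP => [aj|]; last by rewrite scale0r.
by move: ab; rewrite aj jb.
Qed.

Lemma mxcoef_LD Y a b :
  in_LD w blk Y -> blk a != blk b -> mxcoef Y a b = 0.
Proof.
move=> [Yb [YbE ->]] ab; rewrite /mxcoef mulmx_sumr mulmx_suml summxE.
apply: big1 => c _; rewrite YbE !mulmxA onb_block_proj.
case: ifP => [/eqP ac|]; last by rewrite !mul0mx mxE.
rewrite -!mulmxA block_proj_onb; case: ifP => [/eqP bc|]; last by rewrite !mulmx0 mxE.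
by move: ab; rewrite ac bc eqxx.
Qed.

Lemma outer_LD a : in_LD w blk (w a *m adjmx (w a)).
Proof.
exists (fun b => if b == blk a then w a *m adjmx (w a) else 0); split.
  move=> b; case: ifP => ba; last by rewrite mulmx0 mul0mx.
  by rewrite mulmxA block_proj_onb eq_sym ba -mulmxA onb_block_proj eq_sym ba.
by rewrite (bigD1 (blk a)) //= eqxx big1 ?addr0 // => b /negbTE ->.
Qed.

Lemma mxcoef_HS_orth_projector P X a :
  is_HS_orth_projector (in_LD w blk) P -> mxcoef (P X) a a = mxcoef X a a.
Proof.
move=> /(_ X) [_ /(_ _ (outer_LD a))].
by rewrite hs_dot_outer => /eqP; rewrite conjc_eq0 mxcoefB subr_eq0 => /eqP.
Qed.

End OrthonormalBasis.

Section EigenCharacters.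
Variables (R : realType) (n : nat) (w : 'I_n -> 'cV[R[i]]_n).
Hypothesis onb : is_orthonormal_basis w.
Variables (G : Type) (mul : G -> G -> G) (rep : G -> 'M[R[i]]_n) (H : set G).
Hypotheses (rep_mul : forall g h, rep (mul g h) = rep g *m rep h)
  (rep_unitary : forall g, rep g *m adjmx (rep g) = 1%:M)
  (eigenH : forall a h, H h -> exists l : R[i], rep h *m w a = l *: w a).

Definition eigval a h := mxcoef w (rep h) a a.

Definition eigchar a b h := eigval a h * conjc (eigval b h).

Lemma eigvalE a h : H h -> rep h *m w a = eigval a h *: w a.
Proof. by move=> Hh; have [l ha] := eigenH a Hh; rewrite /eigval (mxcoef_eigen onb ha). Qed.

Lemma eigval_unitary a h : H h -> conjc (eigval a h) * eigval a h = 1.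
Proof.
move=> Hh.
have : adjmx (rep h *m w a) *m (rep h *m w a) = adjmx (w a) *m w a.
  by rewrite adjmxM -mulmxA (mulmxA (adjmx (rep h))) (mulmx1C (rep_unitary h)) mul1mx.
rewrite eigvalE // adjmxZ -scalemxAl -scalemxAr scalerA onb eqxx.
by move/matrixP/(_ ord0 ord0); rewrite !mxE /= mulr1.
Qed.

Lemma eigvalM a g h : H g -> H h -> eigval a (mul g h) = eigval a g * eigval a h.
Proof.
move=> Hg Hh; apply: (mxcoef_eigen onb).
by rewrite rep_mul -mulmxA !eigvalE // -scalemxAr eigvalE // scalerA mulrC.
Qed.

Lemma eigcharM a b g h :
  H g -> H h -> eigchar a b (mul g h) = eigchar a b g * eigchar a b h.
Proof. by move=> Hg Hh; rewrite /eigchar !eigvalM // rmorphM mulrACA. Qed.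

Lemma eigchar_diag a h : H h -> eigchar a a h = 1.
Proof. by move=> Hh; rewrite /eigchar mulrC eigval_unitary. Qed.

Lemma eigchar_eq1 a b h : H h -> (eigchar a b h == 1) = (eigval a h == eigval b h).
Proof.
move=> Hh; apply/eqP/eqP => [chi1|ab]; last by rewrite /eigchar ab mulrC eigval_unitary.
by rewrite -[eigval a h]mulr1 -(eigval_unitary b Hh) mulrA -/(eigchar a b h) chi1 mul1r.
Qed.

Lemma conj_rep_outer a b h : H h ->
  rep h *m (w a *m adjmx (w b)) *m adjmx (rep h) =
  eigchar a b h *: (w a *m adjmx (w b)).
Proof.
move=> Hh; rewrite mulmxA -mulmxA -adjmxM !eigvalE // adjmxZ.
by rewrite -scalemxAl -scalemxAr scalerA.
Qed.

End EigenCharacters.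

Lemma closed_Borel_measurable (T : ptopologicalType) (A : set T) :
  closed A -> measurable (A : set (Borel T)).
Proof.
move=> cA; rewrite -[A]setCK; apply: measurableC.
by apply: sub_sigma_algebra; apply: closed_openC.
Qed.

Section HaarSubgroup.
Variables (R : realType) (G : ptopologicalType).
Variables (mul : G -> G -> G) (inv : G -> G) (e : G) (H : set G).
Variable mu : {measure set (Borel G) -> \bar R}.
Hypotheses (topG : is_topological_group mul inv e)
  (abH : is_abelian_subgroup mul inv e H) (closedH : closed H)
  (haar : is_normalized_haar mul H mu).

Let measurableH : measurable (H : set (Borel G)).
Proof. exact: closed_Borel_measurable. Qed.

Lemma haar_subgroup_mass : mu H = 1%E.
Proof.
case: haar => muT muHC _.
have := measureU mu measurableH (measurableC measurableH) (setICr H).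
rewrite setUCr => muU; have : (mu H + mu (~` H) = 1)%E by rewrite -muU.
by rewrite muHC adde0.
Qed.

Lemma continuous_mull g : continuous (mul g).
Proof.
case: topG => _ _ _ cmul _ x.
apply: (continuous_comp (f := fun y => (g, y)) (g := fun p => mul p.1 p.2)).
  by apply: cvg_pair; [apply: cvg_cst | apply: cvg_id].
exact: cmul.
Qed.

Lemma subgroup_mull_preimage g : H g -> mul g @^-1` H = H.
Proof.
case: abH => _ mulH invH _; case: topG => mulA mul1 mulV _ _ Hg.
apply/seteqP; split => x /= Hx; last exact: mulH.
by have := mulH _ _ (invH _ Hg) Hx; rewrite mulA (mulV g).1 (mul1 x).1.
Qed.

Lemma haar_mull_preimage g (A : set (Borel G)) :
  H g -> measurable A -> mu (mul g @^-1` A) = mu A.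
Proof.
case: haar => _ _ invariant; case: abH => _ _ invH _.
case: topG => mulA mul1 mulV _ _ Hg mA.
rewrite -(invariant (inv g) (invH _ Hg) A mA); congr (mu _); apply/seteqP; split.
  move=> x /= Ax; exists (mul g x) => //.
  by rewrite mulA (mulV g).1 (mul1 x).1.
by move=> _ [x Ax <-] /=; rewrite mulA (mulV g).2 (mul1 x).1.
Qed.

Hypothesis compactG : compact [set: G].

Local Notation CI := (cintegral mu H).

Let finH : (mu H < +oo)%E.
Proof. by rewrite haar_subgroup_mass ltry. Qed.

Lemma cintegral_mull g f : H g -> ccontinuous f -> CI (fun x => f (mul g x)) = CI f.
Proof.
move=> Hg; apply: (cintegral_comp compactG measurableH finH (@continuous_mull g)).
  exact: subgroup_mull_preimage.
by move=> A; apply: haar_mull_preimage.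
Qed.

(* Invariance gives CI chi = chi g * CI chi, and chi g <> 1. *)
Lemma cintegral_character (chi : G -> R[i]) g :
  ccontinuous chi -> (forall x y, H x -> H y -> chi (mul x y) = chi x * chi y) ->
  H g -> chi g != 1 -> CI chi = 0.
Proof.
move=> cchi chiM Hg chig1.
have fix_chi : CI chi = chi g * CI chi.
  rewrite -(cintegralZl compactG measurableH finH _ cchi).
  rewrite -{1}(cintegral_mull Hg cchi).
  by apply: eq_cintegral => x; rewrite inE => Hx; exact: chiM.
have : (1 - chi g) * CI chi = 0 by rewrite mulrBl mul1r -fix_chi subrr.
by move/eqP; rewrite mulf_eq0 subr_eq0 eq_sym (negbTE chig1) => /eqP.
Qed.

End HaarSubgroup.

Section TwirlExpansion.
Variables (R : realType) (G : ptopologicalType).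
Variables (n : nat) (rep : G -> 'M[R[i]]_n) (w : 'I_n -> 'cV[R[i]]_n).
Variables (H : set G) (mu : {measure set (Borel G) -> \bar R}).
Hypotheses (compactG : compact [set: G]) (measurableH : measurable (H : set (Borel G)))
  (muH : mu H = 1%E) (onb : is_orthonormal_basis w).
Hypotheses (rep_cont : forall i j, ccontinuous (fun g => rep g i j))
  (eigenH : forall a h, H h -> exists l : R[i], rep h *m w a = l *: w a).

Local Notation CI := (cintegral mu H).
Local Notation chi := (eigchar w rep).

Let finH : (mu H < +oo)%E.
Proof. by rewrite muH ltry. Qed.

Lemma ccontinuous_eigchar a b : ccontinuous (chi a b).
Proof.
have cval c : ccontinuous (eigval w rep c).
  apply: (ccontinuous_mulmx (A := fun h => adjmx (w c) *m rep h)) => i j.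
    by apply: ccontinuous_mulmx => *; [apply: ccontinuous_cst | apply: rep_cont].
  exact: ccontinuous_cst.
by apply: ccontinuousM; last apply: ccontinuousJ.
Qed.

Lemma twirl_onb Y : twirl rep mu H Y =
  \sum_a \sum_b (mxcoef w Y a b * CI (chi a b)) *: (w a *m adjmx (w b)).
Proof.
have cterm (c : R[i]) a b : ccontinuous (fun h => c * chi a b h).
  by apply: ccontinuousM; [apply: ccontinuous_cst | apply: ccontinuous_eigchar].
apply/matrixP => i j; rewrite mxE summxE.
rewrite (@eq_cintegral _ _ _ _ _ (fun h => \sum_a \sum_b
    (mxcoef w Y a b * (w a *m adjmx (w b)) i j) * chi a b h)); last first.
  move=> h; rewrite inE => Hh.
  rewrite {1}(mx_expand_onb onb Y) mulmx_sumr mulmx_suml summxE; apply: eq_bigr => a _.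
  rewrite mulmx_sumr mulmx_suml summxE; apply: eq_bigr => b _.
  by rewrite -scalemxAr -scalemxAl (conj_rep_outer onb eigenH) // scalerA mxE mulrAC.
rewrite cintegral_sum //; last by move=> a; apply: ccontinuous_sum => b; apply: cterm.
apply: eq_bigr => a _; rewrite summxE cintegral_sum //.
apply: eq_bigr => b _.
rewrite (cintegralZl compactG measurableH finH _ (ccontinuous_eigchar a b)).
by rewrite [RHS]mxE mulrAC.
Qed.

End TwirlExpansion.

Theorem lemma2 (R : realType) (G : ptopologicalType)
  (mul : G -> G -> G) (inv : G -> G) (e : G)
  (n : nat) (rep : G -> 'M[R[i]]_n)
  (H : set G) (mu : {measure set (Borel G) -> \bar R})
  (k : nat) (w : 'I_n -> 'cV[R[i]]_n) (blk : 'I_n -> 'I_k)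
  (P_D : 'M[R[i]]_n -> 'M[R[i]]_n) :
  is_topological_group mul inv e ->
  compact [set: G] ->
  is_cont_unitary_rep mul e rep ->
  closed H ->
  is_abelian_subgroup mul inv e H ->
  is_normalized_haar mul H mu ->
  is_NDCSE rep H w blk ->
  is_HS_orth_projector (in_LD w blk) P_D ->
  forall X : 'M[R[i]]_n, dephase w X = twirl rep mu H (P_D X).
Proof.
move=> topG compactG [_ rep_mul rep_unitary rep_cont] closedH abH haar
  [[[onb _] eigenH] nondeg] projD X.
have muH := haar_subgroup_mass closedH haar.
have mH := closed_Borel_measurable closedH.
rewrite (twirl_onb compactG mH muH onb rep_cont eigenH).
apply: eq_bigr => a _; rewrite (bigD1 a) //= big1 ?addr0.
  rewrite (mxcoef_HS_orth_projector onb X a projD).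
  rewrite (@eq_cintegral _ _ _ _ _ (fun=> 1)) ?cintegral_cst ?mulr1 // => h.
  by rewrite inE => Hh; apply: (eigchar_diag onb rep_unitary eigenH).
move=> b ba; have [blk_ab|blk_ab] := eqVneq (blk a) (blk b); last first.
  by rewrite (mxcoef_LD onb (projD X).1 blk_ab) mul0r scale0r.
have ab : a != b by rewrite eq_sym.
have [g [Hg [l [l' [ga gb ll']]]]] := nondeg a b ab blk_ab.
rewrite (cintegral_character topG abH closedH haar compactG (g := g)) ?mulr0 ?scale0r //.
- exact: ccontinuous_eigchar.
- by move=> x y Hx Hy; apply: (eigcharM onb rep_mul eigenH).
rewrite (eigchar_eq1 onb rep_unitary eigenH) // /eigval.
by rewrite (mxcoef_eigen onb ga) (mxcoef_eigen onb gb).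
Qed.
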